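(* Let $q_1=(1,1,1)$, $q_2=(-1,-1,1)$, $q_3=(-1,1,-1)$, $q_4=(1,-1,-1)$, let $t\in(0,1)$ and $q_{j+4}=tq_j$ ($j=1,\dots,4$). Place nonzero mass $\mu_1$ at each vertex $q_1,\dots,q_4$ of the outer tetrahedron and nonzero mass $\mu_2$ at each vertex $q_5,\dots,q_8$ of the inner tetrahedron. There exists $\delta\in(0,1)$ such that: if $t\in(0,\delta)$ and the configuration is central, then $\mu_1$ and $\mu_2$ have the same sign; if $t\in(\delta,1)$ and the configuration is central, then $\mu_1$ and $\mu_2$ have opposite signs.
   Context: A configuration $q=(q_1,\dots,q_N)$ of distinct points in $\mathbb{R}^3$ with masses $m_1,\dots,m_N$ is a central configuration if there exists $c\in\mathbb{R}$ such that $\sum_{j\neq i} m_j\left(\frac{1}{|q_j-q_i|^3}-c\right)(q_j-q_i)=0$ for all $i=1,\dots,N$. *)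

From HB Require Import structures.
From mathcomp Require Import all_boot all_order all_algebra.
From mathcomp Require Import reals.
Set Implicit Arguments. Unset Strict Implicit. Unset Printing Implicit Defensive.
Import Order.TTheory GRing.Theory Num.Theory.
Local Open Scope ring_scope.

Definition enorm (R : realType) (v : 'rV[R]_3) : R :=
  Num.sqrt (\sum_(k < 3) v 0 k ^+ 2).

Definition central_configuration (R : realType) (N : nat)
    (q : 'I_N -> 'rV[R]_3) (m : 'I_N -> R) : Prop :=
  injective q /\
  exists c : R, forall i : 'I_N,
    \sum_(j < N | j != i) (m j * ((enorm (q j - q i)) ^- 3 - c)) *: (q j - q i) = 0.

Definition pt3 (R : realType) (a b c : R) : 'rV[R]_3 :=
  \row_(k < 3) ([:: a; b; c]`_k).

(* q_1 = (1,1,1), q_2 = (-1,-1,1), q_3 = (-1,1,-1), q_4 = (1,-1,-1),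
   indexed by 0,1,2,3. *)
Definition tetra (R : realType) (j : nat) : 'rV[R]_3 :=
  match j with
  | 0 => pt3 1 1 1
  | 1 => pt3 (-1) (-1) 1
  | 2 => pt3 (-1) 1 (-1)
  | _ => pt3 1 (-1) (-1)
  end.

(* Index i : 'I_8 stands for q_{i+1}: q_5..q_8 = t q_1..t q_4. *)
Definition nested_config (R : realType) (t : R) (i : 'I_8) : 'rV[R]_3 :=
  if (i < 4)%N then tetra R i else t *: tetra R (i - 4)%N.

Definition nested_masses (R : realType) (mu1 mu2 : R) (i : 'I_8) : R :=
  if (i < 4)%N then mu1 else mu2.

From HB Require Import structures.
From mathcomp Require Import all_boot all_order all_algebra.
From mathcomp Require Import classical_sets reals ring lra.
Set Implicit Arguments. Unset Strict Implicit. Unset Printing Implicit Defensive.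
Import Order.TTheory GRing.Theory Num.Theory.
Local Open Scope ring_scope.

(* Eliminating the constant c between the x-components of the balance
   equations at q_1 and q_5 gives mu2 * mass_coef2 t = mu1 * mass_coef1 t.
   On (0, 1), mass_coef1 is positive while mass_coef2 is strictly decreasing,
   positive at 1/2 and negative at 9/10.  So mu1 * mu2 has the sign of
   mass_coef2 t, and delta is where mass_coef2 changes sign; taking delta as a
   supremum avoids any continuity argument. *)

Lemma sgr_mul_proportional (R : realDomainType) (x y a b : R) :
  y != 0 -> 0 < b -> y * a = x * b -> Num.sg (x * y) = Num.sg a.
Proof.
move=> y_neq0 b_gt0 yaxb.
have sg_x : Num.sg x = Num.sg y * Num.sg a by rewrite -sgrM yaxb sgrM (gtr0_sg b_gt0) mulr1.
by rewrite sgrM sg_x mulrAC -expr2 sqr_sg y_neq0 mul1r.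
Qed.

Lemma decreasing_sign_change (R : realType) (f : R -> R) (a b x y : R) :
    {in `]a, b[ &, {homo f : s t /~ s < t}} -> a < x -> x < y -> y < b ->
    0 < f x -> f y < 0 ->
  exists d, [/\ x <= d <= y, {in `]a, d[, forall t, 0 < f t}
                & {in `]d, b[, forall t, f t < 0}].
Proof.
move=> f_decr a_lt_x x_lt_y y_lt_b fx_gt0 fy_lt0.
have f_lt s t : a < s -> s < t -> t < b -> f t < f s.
  by move=> a_s s_t t_b; apply: f_decr; rewrite ?in_itv /= ?a_s ?t_b //; lra.
pose E (s : R) := a < s < b /\ 0 < f s.
have Ex : E x by split=> //; apply/andP; split; lra.
have E_lt_y s : E s -> s < y.
  move=> [/andP[a_s s_b] fs_gt0]; rewrite ltNge le_eqVlt; apply/negP.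
  case/predU1P=> [y_s | y_s]; first by move: fs_gt0; rewrite -y_s; lra.
  by have := f_lt y s ltac:(lra) y_s s_b; lra.
have supE : has_sup E by split; [exists x | exists y => s /E_lt_y /ltW].
have x_le_sup := sup_upper_bound supE Ex.
exists (sup E); split.
- by rewrite x_le_sup ge_sup //; [exists x | move=> s /E_lt_y /ltW].
- move=> t; rewrite in_itv /= => /andP[a_t t_sup].
  have gap_gt0 : 0 < sup E - t by lra.
  have [e [/andP[_ e_b] fe_gt0] t_e] := sup_adherent gap_gt0 supE.
  by have := f_lt t e a_t ltac:(lra) e_b; lra.
- move=> t; rewrite in_itv /= => /andP[sup_t t_b].
  rewrite ltNge; apply/negP => ft_ge0.
  have Emid : E ((sup E + t) / 2).
    split; first by apply/andP; split; lra.
    by have := f_lt ((sup E + t) / 2) t ltac:(lra) ltac:(lra) t_b; lra.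
  by have := sup_upper_bound supE Emid; lra.
Qed.

Section SqrtCube.
Variable R : rcfType.
Implicit Types k b : R.

Lemma sqrt_inv_cube k : 0 <= k -> Num.sqrt k ^- 3 = (k * Num.sqrt k)^-1.
Proof. by move=> k_ge0; rewrite exprS mulrC sqr_sqrtr. Qed.

Lemma sqrt_inv_cube_le k b : 0 < b -> b ^+ 2 <= k -> Num.sqrt k ^- 3 <= (k * b)^-1.
Proof.
move=> b_gt0 b2_le_k; have k_gt0 : 0 < k := lt_le_trans (exprn_gt0 2 b_gt0) b2_le_k.
have b_le_sqrt : b <= Num.sqrt k.
  by rewrite -(ger0_norm (ltW b_gt0)) -sqrtr_sqr ler_sqrt // ltW.
rewrite sqrt_inv_cube ?(ltW k_gt0) // lef_pV2 ?posrE ?mulr_gt0 ?sqrtr_gt0 //.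
by rewrite ler_pM2l.
Qed.

Lemma sqrt_inv_cube_ge k b : 0 < k -> k <= b ^+ 2 -> 0 <= b -> (k * b)^-1 <= Num.sqrt k ^- 3.
Proof.
move=> k_gt0 k_le_b2 b_ge0.
have sqrt_le_b : Num.sqrt k <= b.
  by rewrite -(ger0_norm b_ge0) -sqrtr_sqr ler_sqrt // exprn_ge0.
have b_gt0 : 0 < b by apply: lt_le_trans sqrt_le_b; rewrite sqrtr_gt0.
rewrite sqrt_inv_cube ?(ltW k_gt0) // lef_pV2 ?posrE ?mulr_gt0 ?sqrtr_gt0 //.
by rewrite ler_pM2l.
Qed.

End SqrtCube.

Section NestedTetrahedra.
Variable R : realType.

Lemma pt3B (a b c a' b' c' : R) :
  pt3 a b c - pt3 a' b' c' = pt3 (a - a') (b - b') (c - c').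
Proof. by apply/rowP => k; rewrite !mxE; case: k => -[|[|[|]]]. Qed.

Lemma pt3Z (t a b c : R) : t *: pt3 a b c = pt3 (t * a) (t * b) (t * c).
Proof. by apply/rowP => k; rewrite !mxE; case: k => -[|[|[|]]]. Qed.

Lemma enorm_pt3 (a b c : R) : enorm (pt3 a b c) = Num.sqrt (a ^+ 2 + b ^+ 2 + c ^+ 2).
Proof. by rewrite /enorm !big_ord_recr big_ord0 /= !mxE add0r. Qed.

(* |q_i - q_j|, |t q_i - t q_j|, |q_i - t q_i| and |q_i - t q_j| for i != j. *)
Definition outer_edge : R := Num.sqrt 8.
Definition inner_edge (t : R) : R := Num.sqrt (8 * t ^+ 2).
Definition radial_dist (t : R) : R := Num.sqrt (3 * (1 - t) ^+ 2).
Definition cross_dist (t : R) : R := Num.sqrt (3 + 2 * t + 3 * t ^+ 2).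

Definition balance {N : nat} (q : 'I_N -> 'rV[R]_3) (m : 'I_N -> R) (c : R)
    (i : 'I_N) : 'rV[R]_3 :=
  \sum_(j < N | j != i) (m j * ((enorm (q j - q i)) ^- 3 - c)) *: (q j - q i).

Local Ltac fold_distances t :=
  repeat match goal with |- context [Num.sqrt ?x] =>
    first [ rewrite (_ : Num.sqrt x = outer_edge); last by congr Num.sqrt; ring
          | rewrite (_ : Num.sqrt x = inner_edge t); last by congr Num.sqrt; ring
          | rewrite (_ : Num.sqrt x = radial_dist t); last by congr Num.sqrt; ring
          | rewrite (_ : Num.sqrt x = cross_dist t); last by congr Num.sqrt; ring ]
  end.

Lemma balance_nested_outer (t c mu1 mu2 : R) :
  balance (nested_config t) (nested_masses mu1 mu2) c ord0 0 0 =
    - 4 * mu1 * (outer_edge ^- 3 - c) + (t - 1) * mu2 * (radial_dist t ^- 3 - c)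
    - (t + 3) * mu2 * (cross_dist t ^- 3 - c).
Proof.
rewrite /balance summxE big_mkcond !big_ord_recl big_ord0 /=.
rewrite /nested_masses /nested_config /tetra /= !pt3Z !pt3B !enorm_pt3 !mxE /=.
by fold_distances t; ring.
Qed.

Lemma balance_nested_inner (t c mu1 mu2 : R) :
  balance (nested_config t) (nested_masses mu1 mu2) c (@Ordinal 8 4 isT) 0 0 =
    (1 - t) * mu1 * (radial_dist t ^- 3 - c) - (1 + 3 * t) * mu1 * (cross_dist t ^- 3 - c)
    - 4 * t * mu2 * (inner_edge t ^- 3 - c).
Proof.
rewrite /balance summxE big_mkcond !big_ord_recl big_ord0 /=.
rewrite /nested_masses /nested_config /tetra /= !pt3Z !pt3B !enorm_pt3 !mxE /=.
by fold_distances t; ring.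
Qed.

Lemma inner_edgeE (t : R) : 0 <= t -> inner_edge t = t * outer_edge.
Proof. by move=> t_ge0; rewrite /inner_edge mulrC sqrtrM ?sqrtr_sqr ?ger0_norm ?sqr_ge0. Qed.

Lemma radial_distE (t : R) : t <= 1 -> radial_dist t = Num.sqrt 3 * (1 - t).
Proof. by move=> t_le1; rewrite /radial_dist sqrtrM ?sqrtr_sqr ?ger0_norm ?subr_ge0. Qed.

Lemma sqr_radial_dist (t : R) : radial_dist t ^+ 2 = 3 * (1 - t) ^+ 2.
Proof. by rewrite /radial_dist sqr_sqrtr // mulr_ge0 ?sqr_ge0. Qed.

Lemma cross_radicand_gt0 (t : R) : 0 < 3 + 2 * t + 3 * t ^+ 2.
Proof. nra. Qed.

Lemma sqr_cross_dist (t : R) : cross_dist t ^+ 2 = 3 + 2 * t + 3 * t ^+ 2.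
Proof. by rewrite /cross_dist sqr_sqrtr // ltW // cross_radicand_gt0. Qed.

Lemma cross_dist_gt0 (t : R) : 0 < cross_dist t.
Proof. by rewrite /cross_dist sqrtr_gt0 cross_radicand_gt0. Qed.

End NestedTetrahedra.

Arguments outer_edge {R}.

Section MassCoefficients.
Variable R : realType.
Implicit Types t : R.

Definition mass_coef1 t : R :=
  t ^+ 2 * (4 * t * outer_edge ^- 3 + (1 - t) * radial_dist t ^- 3
            - (1 + 3 * t) * cross_dist t ^- 3).

Definition mass_coef2 t : R :=
  4 * outer_edge ^- 3 - t ^+ 3 * (1 - t) * radial_dist t ^- 3
  - t ^+ 3 * (t + 3) * cross_dist t ^- 3.

Lemma outer_edge_gt0 : 0 < outer_edge :> R.
Proof. by rewrite sqrtr_gt0. Qed.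

Lemma central_nested_mass_relation t (mu1 mu2 : R) : 0 < t ->
    central_configuration (nested_config t) (nested_masses mu1 mu2) ->
  mu2 * mass_coef2 t = mu1 * mass_coef1 t.
Proof.
move=> t_gt0 [_ [c balanced]].
have outer_eq := balance_nested_outer t c mu1 mu2.
have inner_eq := balance_nested_inner t c mu1 mu2.
rewrite (balanced _ : balance _ _ _ _ = 0) mxE in outer_eq.
rewrite (balanced _ : balance _ _ _ _ = 0) mxE in inner_eq.
rewrite inner_edgeE ?ltW // in inner_eq.
(* [c] has coefficient [4 (mu1 + mu2)] in [outer_eq] and [t] times that in [inner_eq]. *)
apply/eqP; rewrite -subr_eq0; apply/eqP.
transitivity (t ^+ 2 * (t * 0 - 0)); last by ring.
rewrite {1}outer_eq {1}inner_eq /mass_coef1 /mass_coef2.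
set Y := radial_dist t ^- 3; set Z := cross_dist t ^- 3.
by field; rewrite !gt_eqF ?outer_edge_gt0.
Qed.

Lemma cross_radial_poly_le t : 0 < t < 1 ->
  27 * ((1 + 3 * t) * (1 - t) ^+ 2) ^+ 2 <= (3 + 2 * t + 3 * t ^+ 2) ^+ 3.
Proof.
move=> /andP[t_gt0 t_lt1].
have -> : (3 + 2 * t + 3 * t ^+ 2) ^+ 3 = 27 * ((1 + 3 * t) * (1 - t) ^+ 2) ^+ 2
    + t ^+ 2 * (360 + 224 * t - 720 * t ^+ 2 + 864 * t ^+ 3 - 216 * t ^+ 4) by ring.
rewrite lerDl mulr_ge0 ?sqr_ge0 //; nra.
Qed.

Lemma cross_radial_le t : 0 < t < 1 ->
  (1 + 3 * t) * radial_dist t ^+ 3 <= (1 - t) * cross_dist t ^+ 3.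
Proof.
move=> t01; case/andP: (t01) => t_gt0 t_lt1.
have radial_ge0 : 0 <= radial_dist t by exact: sqrtr_ge0.
rewrite -(ler_pXn2r (n := 2)) // ?nnegrE; last 2 first.
- by rewrite mulr_ge0 ?exprn_ge0 //; lra.
- by rewrite mulr_ge0 ?exprn_ge0 ?ltW ?cross_dist_gt0 //; lra.
rewrite (exprMn _ (1 + 3 * t)) (exprMn _ (1 - t)) !(exprAC _ 3 2) sqr_radial_dist sqr_cross_dist.
have := cross_radial_poly_le t01; have := sqr_ge0 (1 - t); nra.
Qed.

Lemma mass_coef1_gt0 t : 0 < t < 1 -> 0 < mass_coef1 t.
Proof.
move=> t01; case/andP: (t01) => t_gt0 t_lt1.
have radial_gt0 : 0 < radial_dist t by rewrite radial_distE ?ltW ?mulr_gt0 ?sqrtr_gt0 ?subr_gt0.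
have cross_le_radial : (1 + 3 * t) * cross_dist t ^- 3 <= (1 - t) * radial_dist t ^- 3.
  rewrite ler_pdivrMr ?exprn_gt0 ?cross_dist_gt0 // mulrAC ler_pdivlMr ?exprn_gt0 //.
  exact: cross_radial_le.
have outer_term_gt0 : 0 < 4 * t * outer_edge ^- 3.
  by rewrite !mulr_gt0 // invr_gt0 exprn_gt0 // outer_edge_gt0.
rewrite /mass_coef1 mulr_gt0 ?exprn_gt0 //; lra.
Qed.

Lemma sgr_central_masses t (mu1 mu2 : R) : mu2 != 0 -> 0 < t < 1 ->
    central_configuration (nested_config t) (nested_masses mu1 mu2) ->
  Num.sg (mu1 * mu2) = Num.sg (mass_coef2 t).
Proof.
move=> mu2_neq0 /[dup] t01 /andP[t_gt0 _] cc.
apply: sgr_mul_proportional mu2_neq0 (mass_coef1_gt0 t01) _.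
exact: central_nested_mass_relation t_gt0 cc.
Qed.

Lemma cross_ratio_lt s t : 0 < s -> s < t -> s / cross_dist s < t / cross_dist t.
Proof.
move=> s_gt0 s_lt_t; have t_gt0 := lt_trans s_gt0 s_lt_t.
rewrite ltr_pdivrMr ?cross_dist_gt0 // mulrAC ltr_pdivlMr ?cross_dist_gt0 //.
rewrite -(ltr_pXn2r (n := 2)) ?nnegrE ?mulr_ge0 ?ltW ?cross_dist_gt0 //.
rewrite !exprMn !sqr_cross_dist -subr_gt0.
have -> : t ^+ 2 * (3 + 2 * s + 3 * s ^+ 2) - s ^+ 2 * (3 + 2 * t + 3 * t ^+ 2)
    = (t - s) * (3 * (t + s) + 2 * t * s) by ring.
by rewrite mulr_gt0 ?subr_gt0 // addr_gt0 ?mulr_gt0 ?addr_gt0.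
Qed.

Lemma mass_coef2_decreasing : {in `]0, 1[ &, {homo mass_coef2 : s t /~ s < t}}.
Proof.
move=> s t; rewrite !in_itv /= => /andP[s_gt0 s_lt1] /andP[t_gt0 t_lt1] t_lt_s.
have radial_term (x : R) : 0 < x < 1 ->
    x ^+ 3 * (1 - x) * radial_dist x ^- 3 = (Num.sqrt 3 ^+ 3)^-1 * (x ^+ 3 / (1 - x) ^+ 2).
  move=> /andP[x_gt0 x_lt1]; rewrite radial_distE ?ltW //.
  by field; rewrite !gt_eqF ?sqrtr_gt0 ?subr_gt0.
have cross_term (x : R) : x ^+ 3 * (x + 3) * cross_dist x ^- 3 = (x + 3) * (x / cross_dist x) ^+ 3.
  by field; rewrite gt_eqF ?cross_dist_gt0.
have radial_lt : t ^+ 3 / (1 - t) ^+ 2 < s ^+ 3 / (1 - s) ^+ 2.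
  apply: ltr_pM; first (by rewrite exprn_ge0 // ltW); first by rewrite invr_ge0 sqr_ge0.
    by rewrite ltrXn2r // ltW.
  rewrite ltf_pV2 ?posrE ?exprn_gt0 ?subr_gt0 // ltrXn2r ?subr_ge0 ?ltW //.
  by rewrite ltrD2l ltrN2.
have cross_lt : (t + 3) * (t / cross_dist t) ^+ 3 < (s + 3) * (s / cross_dist s) ^+ 3.
  apply: ltr_pM; rewrite ?ltrD2r ?ltrXn2r ?cross_ratio_lt ?exprn_ge0 ?divr_ge0 ?ltW
    ?cross_dist_gt0 //.
  by rewrite addr_gt0.
have inv_sqrt3_gt0 : 0 < (Num.sqrt 3 ^+ 3)^-1 :> R by rewrite invr_gt0 exprn_gt0 ?sqrtr_gt0.
have := radial_lt; rewrite -(ltr_pM2l inv_sqrt3_gt0) => scaled_radial_lt.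
rewrite /mass_coef2 !radial_term ?s_gt0 ?t_gt0 // !cross_term; lra.
Qed.

Lemma mass_coef2_half_gt0 : 0 < mass_coef2 (1 / 2 : R).
Proof.
have outer_lb : (8 * 3)^-1 <= outer_edge ^- 3 :> R by apply: sqrt_inv_cube_ge; lra.
have radial_ub : radial_dist (1 / 2 : R) ^- 3 <= (3 / 4 * (17 / 20))^-1.
  rewrite /radial_dist (_ : 3 * _ = 3 / 4); last by field.
  by apply: sqrt_inv_cube_le; lra.
have cross_ub : cross_dist (1 / 2 : R) ^- 3 <= (19 / 4 * (21 / 10))^-1.
  rewrite /cross_dist (_ : 3 + 2 * (1 / 2) + 3 * (1 / 2) ^+ 2 = 19 / 4 :> R); last by field.
  by apply: sqrt_inv_cube_le; lra.
rewrite /mass_coef2; lra.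
Qed.

Lemma mass_coef2_nine_tenths_lt0 : mass_coef2 (9 / 10 : R) < 0.
Proof.
have outer_ub : outer_edge ^- 3 <= (8 * 2)^-1 :> R by apply: sqrt_inv_cube_le; lra.
have radial_lb : (3 / 100 * (1 / 5))^-1 <= radial_dist (9 / 10 : R) ^- 3.
  rewrite /radial_dist (_ : 3 * _ = 3 / 100); last by field.
  by apply: sqrt_inv_cube_ge; lra.
have cross_ge0 : 0 <= cross_dist (9 / 10 : R) ^- 3 by rewrite invr_ge0 exprn_ge0 ?sqrtr_ge0.
rewrite /mass_coef2; lra.
Qed.

End MassCoefficients.

Theorem theorem6 (R : realType) :
  exists delta : R, 0 < delta < 1 /\
    (forall t mu1 mu2 : R, mu1 != 0 -> mu2 != 0 ->
       0 < t < delta ->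
       central_configuration (nested_config t) (nested_masses mu1 mu2) ->
       0 < mu1 * mu2) /\
    (forall t mu1 mu2 : R, mu1 != 0 -> mu2 != 0 ->
       delta < t < 1 ->
       central_configuration (nested_config t) (nested_masses mu1 mu2) ->
       mu1 * mu2 < 0).
Proof.
have [half_gt0 half_lt ninetenths_lt1] :
  [/\ 0 < 1 / 2 :> R, 1 / 2 < 9 / 10 :> R & 9 / 10 < 1 :> R] by split; lra.
have [delta [/andP[half_le_delta delta_le] coef2_gt0 coef2_lt0]] :=
  decreasing_sign_change (@mass_coef2_decreasing R) half_gt0 half_lt ninetenths_lt1
    (mass_coef2_half_gt0 R) (mass_coef2_nine_tenths_lt0 R).
exists delta; split; first by apply/andP; split; lra.
split=> t mu1 mu2 _ mu2_neq0 /andP[t_lb t_ub] cc.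
- have t_in : t \in `]0, delta[ by rewrite in_itv /= t_lb.
  have t01 : 0 < t < 1 by apply/andP; split; lra.
  have := sgr_central_masses mu2_neq0 t01 cc.
  by rewrite (gtr0_sg (coef2_gt0 t t_in)) => /eqP; rewrite sgr_cp0.
- have t_in : t \in `]delta, 1[ by rewrite in_itv /= t_lb.
  have t01 : 0 < t < 1 by apply/andP; split; lra.
  have := sgr_central_masses mu2_neq0 t01 cc.
  by rewrite (ltr0_sg (coef2_lt0 t t_in)) => /eqP; rewrite sgr_cp0.
Qed.
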